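(* Let $n\ge p$ and $\mathcal X\in\mathrm{St}(n,p,l)$. The orthogonal projection (with respect to the inner product $\langle\mathcal A,\mathcal B\rangle=\sum_{i,j,k}a_{ijk}b_{ijk}$) from $\mathbb R^{n\times p\times l}$ onto the tangent space $T_{\mathcal X}\mathrm{St}(n,p,l)$ is given, for $\mathcal U\in\mathbb R^{n\times p\times l}$, by $$\mathbf P_{\mathcal X}(\mathcal U)=\mathcal U-\tfrac12\mathcal X*(\mathcal X^\top*\mathcal U+\mathcal U^\top*\mathcal X)=\mathcal U-\mathcal X*\operatorname{sym}(\mathcal X^\top*\mathcal U)=(\mathcal I-\mathcal X*\mathcal X^\top)*\mathcal U+\mathcal X*\operatorname{skew}(\mathcal X^\top*\mathcal U).$$
   Context: Frontal slices $A^{(i)}=\mathcal A(:,:,i)$. $\operatorname{bcirc}(\mathcal A)$ is the block circulant matrix with $(i,j)$ block $A^{(((i-j)\bmod l)+1)}$; $\operatorname{unfold}$ stacks the frontal slices vertically, $\operatorname{fold}$ is its inverse; the t-product is $\mathcal A*\mathcal B=\operatorname{fold}(\operatorname{bcirc}(\mathcal A)\operatorname{unfold}(\mathcal B))$. The transpose $\mathcal A^\top$ of $\mathcal A\in\mathbb R^{n\times p\times l}$ is the $p\times n\times l$ tensor with frontal slices $(A^{(1)})^\top,(A^{(l)})^\top,\dots,(A^{(2)})^\top$. $\mathcal I$ is the identity tensor (first frontal slice the identity matrix, others zero). $\mathrm{St}(n,p,l)=\{\mathcal X\in\mathbb R^{n\times p\times l}:\mathcal X^\top*\mathcal X=\mathcal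 I\}$, an embedded submanifold of $\mathbb R^{n\times p\times l}$, and $T_{\mathcal X}\mathrm{St}(n,p,l)$ its tangent space at $\mathcal X$ (a linear subspace of $\mathbb R^{n\times p\times l}$). $\operatorname{sym}(\mathcal A)=(\mathcal A+\mathcal A^\top)/2$, $\operatorname{skew}(\mathcal A)=(\mathcal A-\mathcal A^\top)/2$. *)

From HB Require Import structures.
From mathcomp Require Import all_boot all_order all_algebra.
From mathcomp Require Import all_classical all_reals all_analysis.
Set Implicit Arguments. Unset Strict Implicit. Unset Printing Implicit Defensive.
Import Order.TTheory GRing.Theory Num.Theory.
Local Open Scope ring_scope.

(* A third-order tensor in R^{n x p x l}: the family of its l frontal slices,
   indexed 0..l-1 (slice k here is A^{(k+1)} in the paper). *)
Definition tensor (R : realType) (n p l : nat) := {ffun 'I_l -> 'M[R]_(n, p)}.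

Lemma ord_pos (l : nat) (i : 'I_l) : (0 < l)%N.
Proof. by apply: leq_ltn_trans (ltn_ord i). Qed.

Definition tsub (l : nat) (i j : 'I_l) : 'I_l :=
  Ordinal (ltn_pmod (i + (l - j)) (ord_pos i)).

Definition tneg (l : nat) (k : 'I_l) : 'I_l :=
  Ordinal (ltn_pmod (l - k) (ord_pos k)).

(* t-product: fold(bcirc(A) unfold(B)); slice i = sum_j A^{(i-j mod l)} B^{(j)} *)
Definition tprod (R : realType) (n p q l : nat)
  (A : tensor R n p l) (B : tensor R p q l) : tensor R n q l :=
  [ffun i => \sum_(j < l) A (tsub i j) *m B j].

(* tensor transpose: slices A1^T, Al^T, ..., A2^T *)
Definition ttr (R : realType) (n p l : nat) (A : tensor R n p l) : tensor R p n l :=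
  [ffun k => (A (tneg k))^T].

Definition tid (R : realType) (n l : nat) : tensor R n n l :=
  [ffun k : 'I_l => if val k == 0%N then 1%:M else 0].

Definition tsym (R : realType) (n l : nat) (A : tensor R n n l) : tensor R n n l :=
  2^-1 *: (A + ttr A).
Definition tskew (R : realType) (n l : nat) (A : tensor R n n l) : tensor R n n l :=
  2^-1 *: (A - ttr A).

Definition tinner (R : realType) (n p l : nat) (A B : tensor R n p l) : R :=
  \sum_(k < l) \sum_(i < n) \sum_(j < p) A k i j * B k i j.

Definition tStiefel (R : realType) (n p l : nat) : set (tensor R n p l) :=
  [set X | tprod (ttr X) X = tid R p l].

Definition tangent_space (R : realType) (n p l : nat)
  (M : set (tensor R n p l)) (X : tensor R n p l) : set (tensor R n p l) :=
  [set V : tensor R n p l | exists gamma : R -> tensor R n p l,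
     [/\ gamma 0 = X, (forall t, M (gamma t)) &
         forall k i j, is_derive (0 : R) (1 : R) (fun t => gamma t k i j) (V k i j)]].

Definition is_orth_proj (R : realType) (n p l : nat)
  (S : set (tensor R n p l)) (P : tensor R n p l -> tensor R n p l) : Prop :=
  forall U, S (P U) /\ (forall V, S V -> tinner (U - P U) V = 0).

Arguments tStiefel R n p l : clear implicits.
Arguments tid R n l : clear implicits.

From HB Require Import structures.
From mathcomp Require Import all_boot all_order all_algebra.
From mathcomp Require Import all_classical all_reals all_analysis.
From mathcomp Require Import lra ring.
Import Order.TTheory GRing.Theory Num.Theory.
Import numFieldNormedType.Exports.
Local Open Scope ring_scope.
Set Implicit Arguments. Unset Strict Implicit. Unset Printing Implicit Defensive.

(* Differentiating [X(t)^T * X(t) = I] shows that every tangent vector [V] at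
   [X] satisfies [X^T * V + V^T * X = 0].  Conversely, for such [V] pick a
   skew-symmetric [W] with [W * X = V]; the Cayley curve
   [t |-> (I - tW/2)^-1 * (I + tW/2) * X] stays on the Stiefel set and has
   velocity [V] at [0].  Everything rests on [<T, W * T> = 0] for skew [W]:
   it makes [I - sW] invertible with an inverse bounded uniformly in [s],
   which yields the derivative of the curve.  With the tangent space known,
   [P_X(U)] is tangent by direct computation, and [U - P_X(U) = X * S] with
   [S] symmetric is orthogonal to it, since [<X * S, V> = <S, X^T * V>]
   pairs a symmetric tensor with a skew-symmetric one. *)

Section TProduct.
Variable R : realType.

Lemma tsubE l (i j : 'I_l.+1) : tsub i j = i - j.
Proof. by apply/val_inj; rewrite /= modnDmr. Qed.

Lemma tnegE l (k : 'I_l.+1) : tneg k = - k.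
Proof. by apply/val_inj. Qed.

Lemma tprodA n p q r l (A : tensor R n p l) (B : tensor R p q l) (C : tensor R q r l) :
  tprod A (tprod B C) = tprod (tprod A B) C.
Proof.
apply/ffunP => i; rewrite !ffunE.
case: l A B C i => [|l] A B C i; first by case: i.
under eq_bigr => j _ do rewrite ffunE mulmx_sumr.
rewrite exchange_big; apply: eq_bigr => m _; rewrite ffunE mulmx_suml.
rewrite (reindex_inj (addIr m)); apply: eq_bigr => j _.
by rewrite !tsubE addrK mulmxA opprD addrA addrAC.
Qed.

Lemma tprod1l n q l (A : tensor R n q l) : tprod (tid R n l) A = A.
Proof.
apply/ffunP => i; rewrite ffunE.
case: l A i => [|l] A i; first by case: i.
rewrite (bigD1 i) //= big1 ?addr0 => [|j ji]; rewrite ffunE tsubE.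
  by rewrite subrr mul1mx.
have /negbTE-> : val (i - j) != 0%N by rewrite -[_ == _]/(i - j == 0) subr_eq0 eq_sym.
by rewrite mul0mx.
Qed.

Lemma tprod1r n q l (A : tensor R n q l) : tprod A (tid R q l) = A.
Proof.
apply/ffunP => i; rewrite ffunE.
case: l A i => [|l] A i; first by case: i.
rewrite (bigD1 ord0) //= big1 ?addr0 => [|j j0]; rewrite ffunE.
  by rewrite tsubE subr0 mulmx1.
by rewrite -[_ == _]/(j == ord0) (negbTE j0) mulmx0.
Qed.

Lemma ttrK n p l (A : tensor R n p l) : ttr (ttr A) = A.
Proof.
apply/ffunP => k; rewrite !ffunE trmxK.
case: l A k => [|l] A k; first by case: k.
by rewrite !tnegE opprK.
Qed.

Lemma ttr_tprod n p q l (A : tensor R n p l) (B : tensor R p q l) :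
  ttr (tprod A B) = tprod (ttr B) (ttr A).
Proof.
apply/ffunP => k; rewrite !ffunE raddf_sum.
case: l A B k => [|l] A B k; first by case: k.
rewrite (reindex_inj (addIr (- k))); apply: eq_bigr => j _.
by rewrite !ffunE /= trmx_mul !tsubE !tnegE !opprB addKr.
Qed.

Lemma ttr1 n l : ttr (tid R n l) = tid R n l.
Proof.
apply/ffunP => k; rewrite !ffunE.
case: l k => [|l] k; first by case: k.
rewrite tnegE -[val (- k) == 0%N]/(- k == 0) oppr_eq0.
by case: ifP; rewrite ?trmx1 ?trmx0.
Qed.

Lemma tprodDl n p q l (A B : tensor R n p l) (C : tensor R p q l) :
  tprod (A + B) C = tprod A C + tprod B C.
Proof.
by apply/ffunP => i; rewrite !ffunE -big_split; apply: eq_bigr => j _; rewrite ffunE mulmxDl.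
Qed.

Lemma tprodZl n p q l a (A : tensor R n p l) (C : tensor R p q l) :
  tprod (a *: A) C = a *: tprod A C.
Proof.
by apply/ffunP => i; rewrite !ffunE scaler_sumr; apply: eq_bigr => j _; rewrite ffunE scalemxAl.
Qed.

Lemma tprodNl n p q l (A : tensor R n p l) (C : tensor R p q l) :
  tprod (- A) C = - tprod A C.
Proof. by rewrite -scaleN1r tprodZl scaleN1r. Qed.

Lemma tprodBl n p q l (A B : tensor R n p l) (C : tensor R p q l) :
  tprod (A - B) C = tprod A C - tprod B C.
Proof. by rewrite tprodDl tprodNl. Qed.

Lemma tprodr_is_linear n p q l (A : tensor R n p l) : linear (@tprod R n p q l A).
Proof.
move=> a B C; apply/ffunP => i; rewrite !ffunE scaler_sumr -big_split.
by apply: eq_bigr => j _; rewrite !ffunE mulmxDr scalemxAr.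
Qed.
HB.instance Definition _ n p q l (A : tensor R n p l) :=
  GRing.isLinear.Build R (tensor R p q l) (tensor R n q l) *:%R (tprod A)
    (tprodr_is_linear A).

Lemma ttr_is_linear n p l : linear (@ttr R n p l).
Proof. by move=> a A B; apply/ffunP => k; rewrite !ffunE linearP. Qed.
HB.instance Definition _ n p l :=
  GRing.isLinear.Build R (tensor R n p l) (tensor R p n l) *:%R (@ttr R n p l)
    (@ttr_is_linear n p l).

Section Linearity.
Variables (n p q l : nat) (A : tensor R n p l).
Implicit Types (B C : tensor R p q l) (D E : tensor R n p l).

Lemma tprodDr B C : tprod A (B + C) = tprod A B + tprod A C. Proof. exact: linearD. Qed.
Lemma tprodBr B C : tprod A (B - C) = tprod A B - tprod A C. Proof. exact: linearB. Qed.
Lemma tprodNr B : tprod A (- B) = - tprod A B. Proof. exact: linearN. Qed.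
Lemma tprodZr a B : tprod A (a *: B) = a *: tprod A B. Proof. exact: linearZ. Qed.

Lemma ttrD D E : ttr (D + E) = ttr D + ttr E. Proof. exact: linearD. Qed.
Lemma ttrB D E : ttr (D - E) = ttr D - ttr E. Proof. exact: linearB. Qed.
Lemma ttrN D : ttr (- D) = - ttr D. Proof. exact: linearN. Qed.
Lemma ttrZ a D : ttr (a *: D) = a *: ttr D. Proof. exact: linearZ. Qed.

End Linearity.

Lemma tprod_entry n p q l (A : tensor R n p l) (B : tensor R p q l) k i j :
  tprod A B k i j = \sum_(m < l) \sum_(c < p) A (tsub k m) i c * B m c j.
Proof. by rewrite ffunE summxE; apply: eq_bigr => m _; rewrite mxE. Qed.

Lemma ttr_entry n p l (A : tensor R n p l) k i j : ttr A k i j = A (tneg k) j i.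
Proof. by rewrite ffunE mxE. Qed.

End TProduct.

Ltac tensor_simpl :=
  rewrite ?(ttrB, ttrD, ttrN, ttrZ, ttr_tprod, ttrK, ttr1, tprodBl, tprodDl, tprodNl,
            tprodZl, tprodBr, tprodDr, tprodNr, tprodZr, tprod1l, tprod1r);
  rewrite -?tprodA.

(* Compound tensors must be generalized before calling [tensor_lra], since
   [ffunE] would also unfold [tprod] and [ttr]. *)
Ltac tensor_lra :=
  apply/ffunP => ?; apply/matrixP => ? ?; rewrite !ffunE !mxE; lra.

Section TInner.
Variable R : realType.

Lemma tinnerE n p l (A B : tensor R n p l) :
  tinner A B = \sum_(k < l) \tr ((A k)^T *m B k).
Proof.
apply: eq_bigr => k _; rewrite /mxtrace.
under [RHS]eq_bigr => j _ do rewrite mxE.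
rewrite exchange_big; apply: eq_bigr => j _; apply: eq_bigr => i _.
by rewrite !mxE.
Qed.

Lemma tinnerC n p l (A B : tensor R n p l) : tinner A B = tinner B A.
Proof. by do 3!apply: eq_bigr => ? _; rewrite mulrC. Qed.

Lemma tinnerDl n p l (A B C : tensor R n p l) :
  tinner (A + B) C = tinner A C + tinner B C.
Proof.
rewrite /tinner -big_split; apply: eq_bigr => k _.
rewrite -big_split; apply: eq_bigr => i _.
by rewrite -big_split; apply: eq_bigr => j _; rewrite !ffunE !mxE mulrDl.
Qed.

Lemma tinnerZl n p l a (A B : tensor R n p l) : tinner (a *: A) B = a * tinner A B.
Proof.
rewrite /tinner mulr_sumr; apply: eq_bigr => k _.
rewrite mulr_sumr; apply: eq_bigr => i _.
by rewrite mulr_sumr; apply: eq_bigr => j _; rewrite !ffunE !mxE mulrA.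
Qed.

Lemma tinner0l n p l (A : tensor R n p l) : tinner 0 A = 0.
Proof. by rewrite -(scale0r (0 : tensor R n p l)) tinnerZl mul0r. Qed.

Lemma tinnerNl n p l (A B : tensor R n p l) : tinner (- A) B = - tinner A B.
Proof. by rewrite -scaleN1r tinnerZl mulN1r. Qed.

Lemma tinnerBl n p l (A B C : tensor R n p l) :
  tinner (A - B) C = tinner A C - tinner B C.
Proof. by rewrite tinnerDl tinnerNl. Qed.

Lemma tinnerZr n p l a (A B : tensor R n p l) : tinner A (a *: B) = a * tinner A B.
Proof. by rewrite tinnerC tinnerZl tinnerC. Qed.

Lemma tinnerNr n p l (A B : tensor R n p l) : tinner A (- B) = - tinner A B.
Proof. by rewrite tinnerC tinnerNl tinnerC. Qed.

Lemma tinnerBr n p l (A B C : tensor R n p l) :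
  tinner A (B - C) = tinner A B - tinner A C.
Proof. by rewrite tinnerC tinnerBl !(tinnerC A). Qed.

Lemma sqr_entry_le_tinner n p l (A : tensor R n p l) k i j :
  A k i j ^+ 2 <= tinner A A.
Proof.
have mul_self_ge0 (x : R) : 0 <= x * x by rewrite -expr2 sqr_ge0.
rewrite /tinner (bigD1 k) //= (bigD1 i) //= (bigD1 j) //= expr2 -!addrA lerDl.
by rewrite !addr_ge0 ?sumr_ge0 // => *; rewrite ?sumr_ge0 // => *; rewrite sumr_ge0.
Qed.

Lemma tinner_ge0 n p l (A : tensor R n p l) : 0 <= tinner A A.
Proof. by do 3!(apply: sumr_ge0 => ? _); rewrite -expr2 sqr_ge0. Qed.

Lemma tinner_eq0 n p l (A : tensor R n p l) : tinner A A = 0 -> A = 0.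
Proof.
move=> A0; apply/ffunP => k; apply/matrixP => i j; rewrite !ffunE !mxE.
apply/eqP; rewrite -sqrf_eq0 eq_le sqr_ge0 andbT -A0.
exact: sqr_entry_le_tinner.
Qed.

Lemma abs_entry_le_tinner n p l (A : tensor R n p l) k i j :
  `|A k i j| <= 1 + tinner A A.
Proof.
have := sqr_entry_le_tinner A k i j; rewrite -real_normK ?num_real // => sqr_le.
have := normr_ge0 (A k i j); nra.
Qed.

Lemma tinner_ttr n p l (A B : tensor R n p l) : tinner (ttr A) (ttr B) = tinner A B.
Proof.
rewrite !tinnerE; case: l A B => [|l] A B; first by rewrite !big_ord0.
rewrite (reindex_inj oppr_inj); apply: eq_bigr => k _.
by rewrite !ffunE !tnegE opprK trmxK mxtrace_mulC -mxtrace_tr trmx_mul trmxK.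
Qed.

Lemma tinner_tprodl n p q l (A : tensor R n p l) (B : tensor R p q l) (C : tensor R n q l) :
  tinner (tprod A B) C = tinner B (tprod (ttr A) C).
Proof.
rewrite !tinnerE; case: l A B C => [|l] A B C; first by rewrite !big_ord0.
under eq_bigr => k _ do rewrite ffunE raddf_sum mulmx_suml raddf_sum.
under [RHS]eq_bigr => k _ do rewrite ffunE mulmx_sumr raddf_sum.
rewrite exchange_big; apply: eq_bigr => j _; apply: eq_bigr => m _.
by rewrite !ffunE /= !tsubE !tnegE opprB trmx_mul !mulmxA.
Qed.

Lemma tinner_sym_skew n l (S K : tensor R n n l) :
  ttr S = S -> ttr K = - K -> tinner S K = 0.
Proof.
move=> S_sym K_skew; apply/eqP; rewrite -[_ == 0](mulrn_eq0 _ 2) mulr2n.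
by rewrite -{1}(tinner_ttr S K) S_sym K_skew tinnerNr addNr.
Qed.

Lemma tinner_skew n q l (W : tensor R n n l) (T : tensor R n q l) :
  ttr W = - W -> tinner T (tprod W T) = 0.
Proof.
move=> W_skew; apply/eqP; rewrite -[_ == 0](mulrn_eq0 _ 2) mulr2n.
by rewrite {1}tinnerC tinner_tprodl W_skew tprodNl tinnerNr addNr.
Qed.

Lemma tinner_sub_skew n q l (W : tensor R n n l) (T : tensor R n q l) s :
  ttr W = - W ->
  tinner (T - s *: tprod W T) (T - s *: tprod W T) =
  tinner T T + s ^+ 2 * tinner (tprod W T) (tprod W T).
Proof.
move=> W_skew; rewrite !(tinnerBl, tinnerBr, tinnerZl, tinnerZr).
by rewrite [tinner (tprod W T) T]tinnerC tinner_skew //; ring.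
Qed.

End TInner.

Section TRightInverse.
Variables (R : realType) (n l : nat).

Definition trinv (M : tensor R n n l) : tensor R n n l :=
  ((linfun (tprod M))^-1)%VF (tid R n l).

Lemma tprod_trinv (M : tensor R n n l) :
  (forall T : tensor R n n l, tprod M T = 0 -> T = 0) -> tprod M (trinv M) = tid R n l.
Proof.
move=> M_inj; have /lker0_lfunVK : lker (linfun (@tprod R n n n l M)) == 0%VS.
  apply/lker0P => T T'; rewrite !lfunE /= => eqMT.
  by apply/eqP; rewrite -subr_eq0; apply/eqP/M_inj; rewrite tprodBr eqMT subrr.
by move/(_ (tid R n l)); rewrite lfunE.
Qed.

Lemma ttr_tprod_rinv (M Y : tensor R n n l) :
  M + ttr M = 2 *: tid R n l -> tprod M Y = tid R n l ->
  2 *: tprod (ttr Y) Y = Y + ttr Y.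
Proof.
move=> MMt MY; have YtMt : tprod (ttr Y) (ttr M) = tid R n l.
  by rewrite -ttr_tprod MY ttr1.
have -> : 2 *: tprod (ttr Y) Y = tprod (ttr Y) (tprod (2 *: tid R n l) Y).
  by rewrite tprodZl tprod1l tprodZr.
rewrite -MMt tprodDl tprodDr MY tprod1r.
by rewrite tprodA YtMt tprod1l addrC.
Qed.

End TRightInverse.

Section TCurves.
Variable R : realType.
Local Open Scope classical_set_scope.

Definition is_tderive0 n p l (F : R -> tensor R n p l) (D : tensor R n p l) :=
  forall k i j, is_derive (0 : R) (1 : R) (fun t => F t k i j) (D k i j).

Definition tbounded n p l (F : R -> tensor R n p l) :=
  exists b : R, forall t k i j, `|F t k i j| <= b.

Lemma tbounded_cst n p l (A : tensor R n p l) : tbounded (fun=> A).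
Proof. by exists (1 + tinner A A) => _; exact: abs_entry_le_tinner. Qed.

Lemma tbounded_tprod n p q l (F : R -> tensor R n p l) (G : R -> tensor R p q l) :
  tbounded F -> tbounded G -> tbounded (fun t => tprod (F t) (G t)).
Proof.
move=> [a Fa] [b Gb]; exists (\sum_(m < l) \sum_(c < p) a * b) => t k i j.
rewrite tprod_entry; apply: le_trans (ler_norm_sum _ _ _) _.
apply: ler_sum => m _; apply: le_trans (ler_norm_sum _ _ _) _.
by apply: ler_sum => c _; rewrite normrM ler_pM.
Qed.

Lemma is_derive0_quadratic (f e : R -> R) (a v b : R) :
  (forall t, f t = a + t * v + t ^+ 2 * e t) -> (forall t, `|e t| <= b) ->
  is_derive (0 : R) 1 f v.
Proof.
move=> f_eq e_le; have b_ge0 : 0 <= b := le_trans (normr_ge0 _) (e_le 0).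
have rem_cvg : (fun h => h * e h) @ (0 : R)^' --> (0 : R).
  apply/cvgr0Pnorm_lt => eps eps_gt0; near=> h.
  have : `|h| < eps / (b + 1) by near: h; apply: dnbhs0_lt; rewrite divr_gt0 ?ltr_wpDl.
  rewrite ltr_pdivlMr ?ltr_wpDl // normrM => h_lt.
  have := e_le h; have := normr_ge0 h; have := normr_ge0 (e h); nra.
have quot_cvg : (fun h => h^-1 *: ((f \o shift 0) (h *: 1) - f 0)) @ (0 : R)^' --> v.
  apply: cvg_trans (_ : (fun h => v + h * e h) @ 0^' --> v); last first.
    by rewrite -[X in _ --> X]addr0; apply: cvgD => //; exact: cvg_cst.
  apply: near_eq_cvg; near=> h; have h_neq0 : h != 0 by near: h; exact: nbhs_dnbhs_neq.
  rewrite /= !f_eq addr0 /GRing.scale /= mulr1 mul0r expr0n /= mul0r !addr0.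
  by field.
by split; [apply/cvg_ex; exists v | exact: cvg_lim].
Unshelve. all: by end_near.
Qed.

Lemma is_tderive0_quadratic n p l (F E : R -> tensor R n p l) (A D : tensor R n p l) :
  (forall t, F t = A + t *: D + t ^+ 2 *: E t) -> tbounded E -> is_tderive0 F D.
Proof.
move=> F_eq [b Eb] k i j.
apply: (is_derive0_quadratic (a := A k i j) _ (fun t => Eb t k i j)) => t.
by rewrite F_eq !ffunE !mxE.
Qed.

Lemma is_tderive0_ttr n p l (F : R -> tensor R n p l) D :
  is_tderive0 F D -> is_tderive0 (fun t => ttr (F t)) (ttr D).
Proof.
move=> FD k i j; rewrite ttr_entry.
by under eq_fun => t do rewrite ttr_entry; exact: FD.
Qed.

Lemma is_tderive0_tprod n p q l (F : R -> tensor R n p l) (G : R -> tensor R p q l) D E :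
  is_tderive0 F D -> is_tderive0 G E ->
  is_tderive0 (fun t => tprod (F t) (G t)) (tprod (F 0) E + tprod D (G 0)).
Proof.
move=> FD GE k i j; under eq_fun => t do rewrite tprod_entry.
have is_derive_sum_pt m (h : 'I_m -> R -> R) (dh : 'I_m -> R) :
    (forall x, is_derive (0 : R) (1 : R) (h x) (dh x)) ->
    is_derive (0 : R) (1 : R) (fun t => \sum_(x < m) h x t) (\sum_(x < m) dh x).
  by move/is_derive_sum; rewrite fct_sumE.
apply: is_derive_eq.
  apply: (is_derive_sum_pt) => m; apply: (is_derive_sum_pt) => c.
  exact: is_deriveM (FD _ _ _) (GE _ _ _).
rewrite ffunE mxE !tprod_entry -big_split; apply: eq_bigr => m _.
by rewrite -big_split; apply: eq_bigr => c _; rewrite /= [_ *: D _ _ _]mulrC.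
Qed.

Lemma is_tderive0_cst n p l (A D : tensor R n p l) : is_tderive0 (fun=> A) D -> D = 0.
Proof.
move=> AD; apply/ffunP => k; apply/matrixP => i j; rewrite !ffunE !mxE.
by rewrite -(@derive_val _ _ _ _ _ _ _ (AD k i j)) derive_cst.
Qed.

End TCurves.

Lemma tangent_tStiefel_skew (R : realType) n p l (X V : tensor R n p l) :
  tangent_space (tStiefel R n p l) X V -> tprod (ttr X) V + tprod (ttr V) X = 0.
Proof.
move=> [g [g0 g_st g_der]].
have := is_tderive0_tprod (is_tderive0_ttr g_der) g_der.
by rewrite g0 (funext g_st); exact: is_tderive0_cst.
Qed.

Section CayleyCurve.
Variables (R : realType) (n p l : nat) (X V : tensor R n p l).
Hypothesis X_st : tprod (ttr X) X = tid R p l.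
Hypothesis XV_skew : tprod (ttr X) V + tprod (ttr V) X = 0.

Let K := tprod (ttr X) V.
Let B := tprod V (ttr X) - 2^-1 *: tprod X (tprod K (ttr X)).
Let W := B - ttr B.

Let VtX : tprod (ttr V) X = - K.
Proof. by apply/eqP; rewrite -addr_eq0 addrC /K XV_skew. Qed.

Let W_skew : ttr W = - W.
Proof. by rewrite /W; move: B => A; rewrite ttrB ttrK opprB. Qed.

Let WX : tprod W X = V.
Proof.
rewrite /W /B /K; tensor_simpl; rewrite X_st VtX; tensor_simpl.
rewrite VtX tprodNr; move: (tprod X (tprod (ttr X) V)) => XK; tensor_lra.
Qed.

Let C s := tid R n l - s *: W.
Let Y s := trinv (C s).

Let CY s : tprod (C s) (Y s) = tid R n l.
Proof.
apply: tprod_trinv => T; rewrite tprodBl tprod1l tprodZl => CT0.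
have := tinner_sub_skew T s W_skew; rewrite CT0 tinner0l => T_norm.
apply: tinner_eq0; apply/eqP; rewrite eq_le tinner_ge0 andbT.
by have := tinner_ge0 (tprod W T); have := tinner_ge0 T; nra.
Qed.

Let Y_fix s : Y s - s *: tprod W (Y s) = tid R n l.
Proof. by rewrite -(CY s) /C (tprodBl (tid R n l)) tprod1l tprodZl. Qed.

Let Y_bounded : tbounded (fun t => Y (t / 2)).
Proof.
exists (1 + tinner (tid R n l) (tid R n l)) => t k i j.
apply: le_trans (abs_entry_le_tinner _ _ _ _) _; rewrite lerD2l.
rewrite -(Y_fix (t / 2)) (tinner_sub_skew _ _ W_skew).
by rewrite lerDl mulr_ge0 ?sqr_ge0 ?tinner_ge0.
Qed.

(* [2 (I - sW)^-1 - I = (I - sW)^-1 (I + sW)]; in this form only a right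
   inverse of [I - sW] is needed. *)
Definition cayley_curve t := 2 *: tprod (Y (t / 2)) X - X.

Let cayley_curve0 : cayley_curve 0 = X.
Proof.
have C0 : C 0 = tid R n l by rewrite /C scale0r subr0.
by rewrite /cayley_curve mul0r -[Y 0]tprod1l -C0 CY tprod1l scaler_nat mulr2n addrK.
Qed.

Let cayley_curve_st t : tStiefel R n p l (cayley_curve t).
Proof.
have CCt : C (t / 2) + ttr (C (t / 2)) = 2 *: tid R n l.
  by rewrite /C ttrB ttr1 ttrZ W_skew; move: (tid R n l) W => I W'; tensor_lra.
have := ttr_tprod_rinv CCt (CY _).
rewrite /tStiefel /= /cayley_curve; move: (Y _) => Y' YtY.
have := congr1 (fun M => tprod (ttr X) (tprod M X)) YtY; rewrite /=.
tensor_simpl => XYtYX.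
tensor_simpl; rewrite X_st XYtYX.
by move: (tprod (ttr X) (tprod Y' X)) (tprod (ttr X) (tprod (ttr Y') X)) => a b; tensor_lra.
Qed.

Let cayley_curve_expand t :
  cayley_curve t = X + t *: V + t ^+ 2 *: tprod (2^-1 *: W) (tprod W (tprod (Y (t / 2)) X)).
Proof.
rewrite /cayley_curve tprodZl; set Z := tprod (Y (t / 2)) X.
have YX : Z = X + (t / 2) *: tprod W Z.
  rewrite /Z -[in LHS](subrK ((t / 2) *: tprod W (Y (t / 2))) (Y (t / 2))) Y_fix.
  by rewrite tprodDl tprod1l tprodZl -tprodA.
have WZ : tprod W Z = V + (t / 2) *: tprod W (tprod W Z).
  by rewrite {1}YX tprodDr WX tprodZr.
rewrite {1}YX {1}WZ; move: (tprod W (tprod W Z)) => U.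
by apply/ffunP => ?; apply/matrixP => ? ?; rewrite !ffunE !mxE; field.
Qed.

Lemma skew_tangent_tStiefel : tangent_space (tStiefel R n p l) X V.
Proof.
exists cayley_curve; split; [exact: cayley_curve0 | exact: cayley_curve_st |].
apply: is_tderive0_quadratic cayley_curve_expand _.
apply: (tbounded_tprod (tbounded_cst _)) (tbounded_tprod (tbounded_cst _) _).
exact: (tbounded_tprod Y_bounded (tbounded_cst _)).
Qed.

End CayleyCurve.

Lemma tangent_tStiefelE (R : realType) n p l (X : tensor R n p l) :
  tStiefel R n p l X ->
  tangent_space (tStiefel R n p l) X =
  [set V : tensor R n p l | tprod (ttr X) V + tprod (ttr V) X = 0]%classic.
Proof.
move=> X_st; apply/seteqP; split=> V.
  exact: tangent_tStiefel_skew.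
exact: skew_tangent_tStiefel.
Qed.

Theorem mainTheorem3 (R : realType) (n p l : nat) (hnp : (p <= n)%N)
  (X : tensor R n p l) (hX : tStiefel R n p l X) :
  let P := fun U : tensor R n p l =>
    U - 2^-1 *: tprod X (tprod (ttr X) U + tprod (ttr U) X) in
  is_orth_proj (tangent_space (tStiefel R n p l) X) P /\
  (forall U : tensor R n p l,
     P U = U - tprod X (tsym (tprod (ttr X) U)) /\
     P U = tprod (tid R n l - tprod X (ttr X)) U + tprod X (tskew (tprod (ttr X) U))).
Proof.
move=> P; have XtX q (Z : tensor R p q l) : tprod (ttr X) (tprod X Z) = Z.
  by rewrite tprodA hX tprod1l.
rewrite (tangent_tStiefelE hX); split=> [U|U]; last split.
- split=> [|V /= XV_skew].
    rewrite /P /=; tensor_simpl; rewrite !XtX hX !tprod1r.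
    by move: (tprod (ttr X) U) (tprod (ttr U) X) => A B; tensor_lra.
  rewrite /P subKr tinnerZl tinner_tprodl tinner_sym_skew ?mulr0 //.
    by rewrite ttrD !ttr_tprod !ttrK addrC.
  by rewrite ttr_tprod ttrK; apply/eqP; rewrite -addr_eq0 addrC XV_skew.
- by rewrite /P /tsym tprodZr ttr_tprod ttrK.
- rewrite /P /tskew; tensor_simpl.
  by move: (tprod X (tprod (ttr X) U)) (tprod X (tprod (ttr U) X)) => A B; tensor_lra.
Qed.
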